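(* Let $\delta\in\{1,-1\}$. Let $\alpha,\beta,\gamma\in\mathbb{Z}[i]$ satisfy $\alpha^2+(1+\delta i)\beta^2+\gamma^2=0$, $\alpha\beta\gamma\neq0$, $\gcd(\alpha,\beta)\in U$. Then, after multiplying $\alpha,\beta,\gamma$ by suitable units and possibly interchanging the first and third coordinates, one obtains $(X,Y,Z)$ with $X^2+(1+\delta i)Y^2=Z^2$, $X,Z\in O^I$, $Y=(1+i)^{2+a_1}p_2^{a_2}\cdots p_m^{a_m}$ (integers $a_j\ge0$, $p_j$ distinct Gaussian primes in $O^I$), $\gcd(X,Y)\in U$, $XYZ\ne0$. Conversely, if $(X,Y,Z)$ satisfies $X^2+(1+\delta i)Y^2=Z^2$, $\gcd(X,Y)\in U$, $XYZ\neq 0$, then $(X,Y,iZ)$ is a solution of $X^2+(1+\delta i)Y^2+Z^2=0$ with the same conditions.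
   Context: $\mathbb{Z}[i]$ is the ring of Gaussian integers, $U=\{1,-1,i,-i\}$ its unit group; $R(\alpha),I(\alpha)$ are real and imaginary parts. $\gcd(x,y)\in U$ means no common non-unit divisor. $O=\{\alpha: R(\alpha)+I(\alpha)\equiv1\pmod 2\}$, $O^I=\{\alpha\in O: R(\alpha)\equiv 1\pmod 4\}$. *)

(* Gaussian integers Z[i] modelled as pairs (re, im) of ints. *)
From mathcomp Require Import all_boot all_order all_algebra.
Set Implicit Arguments. Unset Strict Implicit. Unset Printing Implicit Defensive.
Import Order.TTheory GRing.Theory Num.Theory.
Local Open Scope ring_scope.

Definition gi : Type := (int * int)%type.

Definition gRe (x : gi) : int := x.1.
Definition gIm (x : gi) : int := x.2.
Definition g0 : gi := (0, 0).
Definition g1 : gi := (1, 0).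
Definition gI : gi := (0, 1).
Definition gofint (n : int) : gi := (n, 0).
Definition gadd (x y : gi) : gi := (x.1 + y.1, x.2 + y.2).
Definition gmul (x y : gi) : gi := (x.1 * y.1 - x.2 * y.2, x.1 * y.2 + x.2 * y.1).
Fixpoint gexp (x : gi) (n : nat) : gi :=
  match n with O => g1 | S k => gmul x (gexp x k) end.
Definition gsq (x : gi) : gi := gmul x x.

Definition gdvd (d x : gi) : Prop := exists k : gi, x = gmul d k.
Definition gunit (u : gi) : Prop := u = (1, 0) \/ u = (-1, 0) \/ u = (0, 1) \/ u = (0, -1).
Definition gcd_unit (x y : gi) : Prop := forall d : gi, gdvd d x -> gdvd d y -> gunit d.
Definition gprime (p : gi) : Prop :=
  p <> g0 /\ ~ gunit p /\ forall a b : gi, p = gmul a b -> gunit a \/ gunit b.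
Definition inO (x : gi) : Prop := ((x.1 + x.2) %% 2)%Z = 1.
Definition inOI (x : gi) : Prop := inO x /\ (x.1 %% 4)%Z = 1.

Definition gprod_pows (s : seq (gi * nat)) : gi :=
  foldr (fun pa acc => gmul (gexp pa.1 pa.2) acc) g1 s.

(* Reducing the equation modulo 4 shows that beta is divisible by 2 = -i(1+i)^2,
   that alpha and gamma lie in O (coprimality excludes (1+i) | alpha), and that
   exactly one of them has odd real part.  Factoring beta / (1+i)^2 into a unit,
   a power of 1+i and primes of O^I (every prime of O has an associate in O^I)
   determines u2.  The coordinate with odd real part is normalised into O^I by a
   unit e with e^2 = 1, the other one by a unit e' with e'^2 = -1, which turns
   X^2 + cY^2 + Z^2 = 0 into X^2 + cY^2 = Z^2.  When gamma plays the role of X,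
   gcd(gamma, beta) is a unit because a common divisor divides
   alpha^2 = -(c beta^2 + gamma^2) and beta, while alpha^2 and beta are coprime
   by Bezout.  Bezout and factorisations come from induction on the norm, using
   division with remainder. *)

From mathcomp Require Import all_boot all_order all_algebra.
From mathcomp Require Import zify ring.
From Stdlib Require Import Classical.
Set Implicit Arguments. Unset Strict Implicit.
Import Order.TTheory GRing.Theory Num.Theory.
Local Open Scope ring_scope.

Definition gneg (x : gi) : gi := (- x.1, - x.2).
Definition gsub (x y : gi) : gi := gadd x (gneg y).
Definition gconj (x : gi) : gi := (x.1, - x.2).
Definition gnrm (x : gi) : int := x.1 * x.1 + x.2 * x.2.
Definition g1I : gi := (1, 1).

Ltac gi_expand :=
  repeat match goal with x : gi |- _ => destruct x end;
  unfold gsq, gsub, gadd, gmul, gneg, gconj, gnrm, g0, g1, gI, g1I in *; simpl in *.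
Ltac gi_ring := gi_expand; congr (_, _); ring.

Lemma gmulC x y : gmul x y = gmul y x. Proof. gi_ring. Qed.
Lemma gmulA x y z : gmul x (gmul y z) = gmul (gmul x y) z. Proof. gi_ring. Qed.
Lemma gmulCA x y z : gmul x (gmul y z) = gmul y (gmul x z). Proof. gi_ring. Qed.
Lemma gmul1l x : gmul g1 x = x. Proof. gi_ring. Qed.
Lemma gmul1r x : gmul x g1 = x. Proof. gi_ring. Qed.
Lemma gmul0r x : gmul x g0 = g0. Proof. gi_ring. Qed.
Lemma gmulDr x y z : gmul x (gadd y z) = gadd (gmul x y) (gmul x z). Proof. gi_ring. Qed.
Lemma gsqM x y : gsq (gmul x y) = gmul (gsq x) (gsq y). Proof. gi_ring. Qed.

Lemma gnrmM x y : gnrm (gmul x y) = gnrm x * gnrm y.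
Proof. gi_expand; ring. Qed.

Lemma gnrm_ge0 x : 0 <= gnrm x. Proof. gi_expand; nia. Qed.

Lemma gnrm_eq0 x : (gnrm x = 0) <-> x = g0.
Proof. gi_expand; split=> [h|[-> ->]] //; congr (_, _); nia. Qed.

Lemma gnrm_gt0 x : x <> g0 -> 0 < gnrm x.
Proof. by move=> x0; have := gnrm_ge0 x; have := contra_not (gnrm_eq0 x).1 x0; lia. Qed.

Lemma gmul_neq0 x y : x <> g0 -> y <> g0 -> gmul x y <> g0.
Proof. by move=> /gnrm_gt0 ? /gnrm_gt0 ? /gnrm_eq0; rewrite gnrmM; nia. Qed.

Lemma gmul_neq0l x y : gmul x y <> g0 -> x <> g0.
Proof. by move=> h x0; apply: h; rewrite x0 gmulC gmul0r. Qed.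

Lemma gmul_neq0r x y : gmul x y <> g0 -> y <> g0.
Proof. by rewrite gmulC; apply: gmul_neq0l. Qed.

Lemma gnrm_ind (P : gi -> Prop) :
  (forall x, (forall y, gnrm y < gnrm x -> P y) -> P x) -> forall x, P x.
Proof.
move=> IH x; have [n] := ubnP (absz (gnrm x)); elim: n x => // n IHn x lt_x.
apply: IH => y lt_yx; apply: IHn.
by have := gnrm_ge0 y; lia.
Qed.

Lemma gunit_norm u : gunit u <-> gnrm u = 1.
Proof.
split; first by case=> [|[|[|]]] ->; rewrite /gnrm.
case: u => a b; rewrite /gnrm /= => h.
have [a0|[a1|a1]] : a = 0 \/ a = 1 \/ a = -1 by nia.
- have [->|->] : b = 1 \/ b = -1 by nia.
  + by right; right; left; rewrite a0.
  + by right; right; right; rewrite a0.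
- by left; rewrite a1 (_ : b = 0) //; nia.
- by right; left; rewrite a1 (_ : b = 0) //; nia.
Qed.

Lemma gunitM u v : gunit u -> gunit v -> gunit (gmul u v).
Proof. by rewrite !gunit_norm gnrmM => -> ->. Qed.

Lemma gunit_inv u : gunit u -> exists2 v, gunit v & gmul v u = g1.
Proof.
move=> uu; exists (gconj u); first by move: uu; rewrite !gunit_norm; gi_expand; lia.
by move: uu; rewrite gunit_norm; gi_expand => nu; congr (_, _); lia.
Qed.

Lemma gunit_neq0 u : gunit u -> u <> g0.
Proof. by rewrite gunit_norm => nu /gnrm_eq0; rewrite nu. Qed.

Lemma gmul_unit_neq0 u x : gunit u -> x <> g0 -> gmul u x <> g0.
Proof. by move=> /gunit_neq0; apply: gmul_neq0. Qed.

Lemma gunitI : gunit gI. Proof. by right; right; left. Qed.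

Lemma g1I_not_unit : ~ gunit g1I. Proof. by rewrite gunit_norm. Qed.

Lemma gdvd_refl x : gdvd x x. Proof. by exists g1; rewrite gmul1r. Qed.

Lemma gdvd_trans d x y : gdvd d x -> gdvd x y -> gdvd d y.
Proof. by move=> [k ->] [l ->]; exists (gmul k l); rewrite gmulA. Qed.

Lemma gdvd_mull y d x : gdvd d x -> gdvd d (gmul y x).
Proof. by move=> [k ->]; exists (gmul y k); rewrite gmulCA. Qed.

Lemma gdvd_mulr y d x : gdvd d x -> gdvd d (gmul x y).
Proof. by rewrite gmulC; apply: gdvd_mull. Qed.

Lemma gdvd_add d x y : gdvd d x -> gdvd d y -> gdvd d (gadd x y).
Proof. by move=> [k ->] [l ->]; exists (gadd k l); rewrite gmulDr. Qed.

Lemma gdvd1 d : gdvd d g1 -> gunit d.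
Proof.
move=> [k /(congr1 gnrm)]; rewrite gnrmM gunit_norm [gnrm g1]/gnrm /= => e.
have : gnrm d * gnrm k != 0 by rewrite -e.
by rewrite mulf_eq0 negb_or => /andP[? ?]; have := gnrm_ge0 d; have := gnrm_ge0 k; nia.
Qed.

Lemma gdvd_assocr d u x : gunit u -> gdvd d (gmul u x) -> gdvd d x.
Proof.
move=> /gunit_inv [v _ vu] /(gdvd_mull v).
by rewrite gmulA vu gmul1l.
Qed.

Lemma gdvd_assocl d u x : gunit u -> gdvd d x -> gdvd (gmul u d) x.
Proof.
move=> /gunit_inv [v _ vu] [k ->]; exists (gmul v k).
by rewrite gmulCA !gmulA vu gmul1l.
Qed.

Lemma gcd_unit_mul u v x y :
  gunit u -> gunit v -> gcd_unit x y -> gcd_unit (gmul u x) (gmul v y).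
Proof.
move=> uu vu xy d /(gdvd_assocr uu) dx /(gdvd_assocr vu) dy.
exact: xy.
Qed.

Lemma gnrm_lt_mul a b : gmul a b <> g0 -> ~ gunit a -> gnrm b < gnrm (gmul a b).
Proof.
move=> ab0 au; rewrite gnrmM.
have := gnrm_gt0 (gmul_neq0l ab0); have := gnrm_gt0 (gmul_neq0r ab0).
have : gnrm a <> 1 by move/gunit_norm.
nia.
Qed.

Lemma round_div (A n : int) : 0 < n -> exists q, - n <= 2 * (A - q * n) <= n.
Proof. by move=> n0; exists ((2 * A + n) %/ (2 * n))%Z; lia. Qed.

Lemma gdiv x y : y <> g0 -> exists q, gnrm (gsub x (gmul q y)) < gnrm y.
Proof.
move=> y0; have n0 := gnrm_gt0 y0.
have [q1 h1] := round_div (gmul x (gconj y)).1 n0.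
have [q2 h2] := round_div (gmul x (gconj y)).2 n0.
exists (q1, q2); have := gnrm_ge0 (gsub x (gmul (q1, q2) y)).
have : gnrm (gsub x (gmul (q1, q2) y)) * gnrm y =
  ((gmul x (gconj y)).1 - q1 * gnrm y) ^+ 2 + ((gmul x (gconj y)).2 - q2 * gnrm y) ^+ 2.
  by gi_expand; ring.
move: h1 h2 n0; set r := gnrm _; set n := gnrm y.
set e1 := (_ - q1 * n); set e2 := (_ - q2 * n).
nia.
Qed.

Lemma gbezout x y :
  exists g s t, g = gadd (gmul s x) (gmul t y) /\ gdvd g x /\ gdvd g y.
Proof.
elim/gnrm_ind: y x => y IH x.
have [->|y0] := eqVneq y g0.
  exists x, g1, g0; split; first by gi_ring.
  by split; [exact: gdvd_refl | exists g0; rewrite gmul0r].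
have [q /IH lt_r] := gdiv x (elimN eqP y0).
have [g [s [t [eg [gy gr]]]]] := lt_r y.
exists g, t, (gsub s (gmul t q)); split; first by rewrite eg; gi_ring.
split=> //; rewrite (_ : x = gadd (gsub x (gmul q y)) (gmul q y)); last by gi_ring.
by apply: gdvd_add => //; apply: gdvd_mull.
Qed.

Lemma gcd_unit_bezout x y : gcd_unit x y -> exists s t, gadd (gmul s x) (gmul t y) = g1.
Proof.
move=> xy; have [g [s [t [eg [gx gy]]]]] := gbezout x y.
have [v _ vg] := gunit_inv (xy _ gx gy).
exists (gmul v s), (gmul v t); rewrite -vg eg; gi_ring.
Qed.

Lemma gcd_unit_sqrl x y : gcd_unit x y -> gcd_unit (gsq x) y.
Proof.
move=> /gcd_unit_bezout [s [t st]] d dx dy; apply: gdvd1.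
have -> : g1 = gadd (gmul (gsq s) (gsq x))
                    (gmul y (gadd (gmul (2, 0) (gmul s (gmul t x))) (gmul (gsq t) y))).
  by rewrite -[g1]gmul1l -{1 2}st; gi_ring.
by apply: gdvd_add; [apply: gdvd_mull | apply: gdvd_mulr].
Qed.

Lemma g1I_dvdP x : gdvd g1I x <-> ~ inO x.
Proof.
rewrite /inO; split=> [[k ->]|xO]; first by gi_expand; lia.
exists (((x.1 + x.2) %/ 2)%Z, ((x.2 - x.1) %/ 2)%Z).
by gi_expand; congr (_, _); lia.
Qed.

Lemma inO_mul_unit u x : gunit u -> inO x -> inO (gmul u x).
Proof.
move=> uu xO; apply: NNPP => /g1I_dvdP /(gdvd_assocr uu).
by move/g1I_dvdP.
Qed.

Lemma inO_dvd p x : inO x -> gdvd p x -> inO p.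
Proof. by move=> xO px; apply: NNPP => /g1I_dvdP /gdvd_trans /(_ px) /g1I_dvdP. Qed.

Lemma inOI_mul_sign x : inO x -> (x.1 %% 2 = 1)%Z ->
  exists e, [/\ gunit e, gsq e = g1 & inOI (gmul e x)].
Proof.
rewrite /inOI /inO => xO x1.
have [x4|x4] : (x.1 %% 4 = 1)%Z \/ (x.1 %% 4 = 3)%Z by lia.
- by exists (1, 0); split; [left | | gi_expand; lia].
- by exists (-1, 0); split; [right; left | | gi_expand; lia].
Qed.

Lemma inOI_mul_I x : inO x -> (x.1 %% 2 = 0)%Z ->
  exists e, [/\ gunit e, gsq e = (-1, 0) & inOI (gmul e x)].
Proof.
rewrite /inOI /inO => xO x1.
have [x4|x4] : ((- x.2) %% 4 = 1)%Z \/ ((- x.2) %% 4 = 3)%Z by lia.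
- by exists (0, 1); split; [right; right; left | | gi_expand; lia].
- by exists (0, -1); split; [right; right; right | | gi_expand; lia].
Qed.

Lemma inOI_mul_unit x : inO x -> exists2 e, gunit e & inOI (gmul e x).
Proof.
move=> xO; have [x1|x1] : (x.1 %% 2 = 1)%Z \/ (x.1 %% 2 = 0)%Z by lia.
- by have [e [eu _ exO]] := inOI_mul_sign xO x1; exists e.
- by have [e [eu _ exO]] := inOI_mul_I xO x1; exists e.
Qed.

Lemma gprime_mul_unit u p : gunit u -> gprime p -> gprime (gmul u p).
Proof.
move=> uu [p0 [pu pP]]; have [v vu vu1] := gunit_inv uu.
have pE : p = gmul v (gmul u p) by rewrite gmulA vu1 gmul1l.
split; first exact: gmul_unit_neq0.
split=> [upu|a b upE]; first by apply: pu; rewrite pE; apply: gunitM.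
have pE' : p = gmul (gmul v a) b by rewrite pE upE gmulA.
case: (pP _ _ pE') => [va|]; last by right.
by left; rewrite -[a]gmul1l -vu1 (gmulC v) -gmulA; apply: gunitM.
Qed.

Lemma gprime_dvd x : x <> g0 -> ~ gunit x -> exists2 p, gprime p & gdvd p x.
Proof.
elim/gnrm_ind: x => x IH x0 xu.
have [xp|xnp] := classic (gprime x); first by exists x => //; exact: gdvd_refl.
have [a [b [xE [au bu]]]] : exists a b, x = gmul a b /\ ~ gunit a /\ ~ gunit b.
  apply: NNPP => nab; apply: xnp; do 2!split=> //.
  move=> a b xE; apply: NNPP => /not_or_and [au bu]; apply: nab.
  by exists a, b.
have ba0 : gmul b a <> g0 by rewrite gmulC -xE.
have lt_a := gnrm_lt_mul ba0 bu; rewrite gmulC -xE in lt_a.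
have [p pp pa] := IH a lt_a (gmul_neq0r ba0) au.
by exists p => //; rewrite xE; apply: gdvd_mulr.
Qed.

Definition normal_factors (s : seq (gi * nat)) : Prop :=
  uniq (map fst s) /\ {in map fst s, forall p, gprime p /\ inOI p}.

Fixpoint insert_factor (p : gi) (s : seq (gi * nat)) : seq (gi * nat) :=
  if s is (q, e) :: t then
    if q == p then (q, e.+1) :: t else (q, e) :: insert_factor p t
  else [:: (p, 1%N)].

Lemma gprod_pows_cons pa s : gprod_pows (pa :: s) = gmul (gexp pa.1 pa.2) (gprod_pows s).
Proof. by []. Qed.

Lemma gprod_pows_insert p s : gprod_pows (insert_factor p s) = gmul p (gprod_pows s).
Proof.
elim: s => [|[q e] t IH] /=; first by rewrite /gprod_pows /= gmul1r.
case: eqP => [->|_]; rewrite !gprod_pows_cons /=; first by rewrite gmulA.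
by rewrite IH gmulCA.
Qed.

Lemma mem_insert_factor p s : map fst (insert_factor p s) =i p :: map fst s.
Proof.
elim: s => [|[q e] t IH] x //=; case: eqP => [->|_] /=; rewrite !inE.
  by rewrite orbA orbb.
by rewrite IH inE orbCA.
Qed.

Lemma normal_factors_insert p s :
  gprime p -> inOI p -> normal_factors s -> normal_factors (insert_factor p s).
Proof.
move=> pp pO [us ps]; split; last first.
  by move=> q; rewrite mem_insert_factor inE => /predU1P [->|/ps].
elim: s us {ps} => [|[q e] t IH] //=.
case/andP=> qt ut; case: eqP => [_|/eqP qp] /=; first by rewrite qt.
by rewrite mem_insert_factor inE negb_or qp qt IH.
Qed.

Lemma gfactor x : x <> g0 -> exists u k s,
  [/\ gunit u, normal_factors s & x = gmul u (gmul (gexp g1I k) (gprod_pows s))].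
Proof.
elim/gnrm_ind: x => x IH x0.
have [/gunit_norm xu|xnu] := eqVneq (gnrm x) 1.
  by exists x, 0%N, [::]; split=> //=; rewrite /gprod_pows /= !gmul1r.
have {xnu} xu : ~ gunit x by move/gunit_norm/eqP; rewrite (negPf xnu).
have [xO|/eqP xnO] := eqVneq ((x.1 + x.2) %% 2)%Z 1.
- have [p pp px] := gprime_dvd x0 xu.
  have [e eu epO] := inOI_mul_unit (inO_dvd xO px).
  have [y xE] := gdvd_assocl eu px.
  have ep_prime := gprime_mul_unit eu pp.
  have [_ [ep_nu _]] := ep_prime.
  have epy0 : gmul (gmul e p) y <> g0 by rewrite -xE.
  have lt_y := gnrm_lt_mul epy0 ep_nu; rewrite -xE in lt_y.
  have [u [k [s [uu fs yE]]]] := IH y lt_y (gmul_neq0r epy0).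
  exists u, k, (insert_factor (gmul e p) s); split=> //; first exact: normal_factors_insert.
  by rewrite xE yE gprod_pows_insert !(gmulCA (gmul e p)).
- have [y xE] := proj2 (g1I_dvdP x) xnO.
  have g1Iy0 : gmul g1I y <> g0 by rewrite -xE.
  have lt_y := gnrm_lt_mul g1Iy0 g1I_not_unit; rewrite -xE in lt_y.
  have [u [k [s [uu fs yE]]]] := IH y lt_y (gmul_neq0r g1Iy0).
  by exists u, k.+1, s; split=> //; rewrite xE yE /= gmulCA -gmulA.
Qed.

Lemma gexpD x m n : gexp x (m + n) = gmul (gexp x m) (gexp x n).
Proof. by elim: m => [|m IH] /=; rewrite ?gmul1l // IH gmulA. Qed.

Lemma gunit1 : gunit g1. Proof. by left. Qed.

Lemma g1I_sq_dvd (y : gi) : (y.1 %% 2 = 0)%Z -> (y.2 %% 2 = 0)%Z -> gdvd (gexp g1I 2) y.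
Proof.
move=> y1 y2; exists ((y.2 %/ 2)%Z, - (y.1 %/ 2)%Z); rewrite /=; gi_expand.
by congr (_, _); lia.
Qed.

Definition sol3 (c x y z : gi) : Prop :=
  gadd (gadd (gsq x) (gmul c (gsq y))) (gsq z) = g0.

Lemma sol3_scale c u x y z : sol3 c x y z -> sol3 c (gmul u x) (gmul u y) (gmul u z).
Proof. by rewrite /sol3 !gsqM (gmulCA c) -!gmulDr => ->; rewrite gmul0r. Qed.

Lemma sol3_swap c x y z : sol3 c x y z -> sol3 c z y x.
Proof. by rewrite /sol3; gi_expand => -[E1 E2]; congr (_, _); lia. Qed.

Lemma sol3_mulI c x y z : gadd (gsq x) (gmul c (gsq y)) = gsq z -> sol3 c x y (gmul gI z).
Proof. by rewrite /sol3; gi_expand => -[E1 E2]; congr (_, _); lia. Qed.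

Lemma sol3_gcd_unit_swap c x y z : sol3 c x y z -> gcd_unit x y -> gcd_unit z y.
Proof.
move=> E /gcd_unit_sqrl xy d dz dy; apply: xy => //.
have -> : gsq x = gadd (gmul y (gneg (gmul c y))) (gmul z (gneg z)).
  by move: E; rewrite /sol3; gi_expand => -[E1 E2]; congr (_, _); lia.
by apply: gdvd_add; apply: gdvd_mulr.
Qed.

Lemma int_parity (a : int) : exists k, a = 2 * k \/ a = 2 * k + 1.
Proof. by exists (a %/ 2)%Z; lia. Qed.

Lemma sol3_parity delta x y z : delta = 1 \/ delta = -1 -> sol3 (1, delta) x y z ->
  ~ inO y /\ (inO x -> inO z) /\
  (inO x -> (y.1 %% 2 = 0)%Z /\ (y.2 %% 2 = 0)%Z /\ ((x.1 %% 2 = 1)%Z <-> (z.1 %% 2 = 0)%Z)).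
Proof.
case: x y z => [a1 a2] [b1 b2] [c1 c2].
rewrite /sol3 /inO /gsq /gadd /gmul /g0 /= => hdelta.
have [k1 [->|->]] := int_parity a1; have [k2 [->|->]] := int_parity a2;
have [l1 [->|->]] := int_parity b1; have [l2 [->|->]] := int_parity b2;
have [m1 [->|->]] := int_parity c1; have [m2 [->|->]] := int_parity c2;
by case: hdelta => -> [E1 E2]; lia.
Qed.

Definition even_normal_form (y : gi) : Prop :=
  exists k s, normal_factors s /\ y = gmul (gexp g1I (2 + k)) (gprod_pows s).

Lemma sol3_coprime_inO delta x y z : delta = 1 \/ delta = -1 ->
  sol3 (1, delta) x y z -> gcd_unit x y -> inO x.
Proof.
move=> hdelta E xy; have [ynO _] := sol3_parity hdelta E.
apply: NNPP => /g1I_dvdP g1Ix; apply: g1I_not_unit.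
by apply: xy g1Ix _; apply/g1I_dvdP.
Qed.

Lemma sol3_even_normal_form delta x y z : delta = 1 \/ delta = -1 ->
  sol3 (1, delta) x y z -> inO x -> y <> g0 -> exists2 v, gunit v & even_normal_form (gmul v y).
Proof.
move=> hdelta E xO y0; have [_ [_ /(_ xO) [y1 [y2 _]]]] := sol3_parity hdelta E.
have [y' yE] := g1I_sq_dvd y1 y2.
have y'0 : y' <> g0 by move=> y'0; apply: y0; rewrite yE y'0 gmul0r.
have [u [k [s [uu fs y'E]]]] := gfactor y'0.
have [v vu vu1] := gunit_inv uu.
exists v => //; exists k, s; split=> //.
by rewrite yE y'E gexpD gmulCA (gmulA v) vu1 gmul1l gmulA.
Qed.

Definition normal_solution (delta : int) (X Y Z : gi) : Prop :=
  gadd (gsq X) (gmul (1, delta) (gsq Y)) = gsq Z /\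
  inOI X /\ inOI Z /\
  (exists (a1 : nat) (s : seq (gi * nat)),
     uniq (map fst s) /\
     (forall pa, pa \in s -> gprime pa.1 /\ inOI pa.1) /\
     Y = gmul (gexp g1I (2 + a1)) (gprod_pows s)) /\
  gcd_unit X Y /\
  X <> g0 /\ Y <> g0 /\ Z <> g0.

Lemma normal_solution_of_sol3 delta x y z :
  delta = 1 \/ delta = -1 -> sol3 (1, delta) x y z -> gcd_unit x y ->
  x <> g0 -> y <> g0 -> z <> g0 -> inO x -> (x.1 %% 2 = 1)%Z ->
  even_normal_form y ->
  exists e e', [/\ gunit e, gunit e' & normal_solution delta (gmul e x) y (gmul e' z)].
Proof.
move=> hdelta E xy x0 y0 z0 xO x1 [k [s [[us ps] yE]]].
have [_ [zO /(_ xO) [_ [_ xz]]]] := sol3_parity hdelta E.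
have [e [eu e2 exO]] := inOI_mul_sign xO x1.
have [e' [e'u e'2 ezO]] := inOI_mul_I (zO xO) (proj1 xz x1).
exists e, e'; split=> //; split.
  rewrite !gsqM e2 e'2; move: E; rewrite /sol3.
  by gi_expand => -[E1 E2]; congr (_, _); lia.
do 2!split=> //; split.
  by exists k, s; split; [|split=> [pa /(map_f fst) /ps|]].
split; first by have := gcd_unit_mul eu gunit1 xy; rewrite gmul1l.
by split; [|split] => //; apply: gmul_unit_neq0.
Qed.

Unset Implicit Arguments.

Theorem theorem4p14 (delta : int) (hdelta : delta = 1 \/ delta = -1) :
  (* direct part *)
  (forall alpha beta gamma : gi,
     gadd (gadd (gsq alpha) (gmul (1, delta) (gsq beta))) (gsq gamma) = g0 ->
     alpha <> g0 -> beta <> g0 -> gamma <> g0 ->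
     gcd_unit alpha beta ->
     exists (u1 u2 u3 : gi) (swap : bool),
       gunit u1 /\ gunit u2 /\ gunit u3 /\
       let X := if swap then gmul u3 gamma else gmul u1 alpha in
       let Y := gmul u2 beta in
       let Z := if swap then gmul u1 alpha else gmul u3 gamma in
       gadd (gsq X) (gmul (1, delta) (gsq Y)) = gsq Z /\
       inOI X /\ inOI Z /\
       (exists (a1 : nat) (s : seq (gi * nat)),
          uniq (map fst s) /\
          (forall pa, pa \in s -> gprime pa.1 /\ inOI pa.1) /\
          Y = gmul (gexp (1, 1) (2 + a1)) (gprod_pows s)) /\
       gcd_unit X Y /\
       X <> g0 /\ Y <> g0 /\ Z <> g0)
  /\
  (* converse *)
  (forall X Y Z : gi,
     gadd (gsq X) (gmul (1, delta) (gsq Y)) = gsq Z ->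
     gcd_unit X Y -> X <> g0 -> Y <> g0 -> Z <> g0 ->
     gadd (gadd (gsq X) (gmul (1, delta) (gsq Y))) (gsq (gmul gI Z)) = g0 /\
     gcd_unit X Y /\ X <> g0 /\ Y <> g0 /\ gmul gI Z <> g0).
Proof.
split=> [alpha beta gamma E a0 b0 c0 ab | X Y Z E XY X0 Y0 Z0]; last first.
  by split; [exact: sol3_mulI | do 3!split=> //; exact: gmul_unit_neq0 gunitI Z0].
have aO := sol3_coprime_inO hdelta E ab.
have [v vu Yv] := sol3_even_normal_form hdelta E aO b0.
have E' := sol3_scale v E.
have aO' := inO_mul_unit vu aO.
have [_ [xzO' /(_ aO') [_ [_ par]]]] := sol3_parity hdelta E'.
have ab' := gcd_unit_mul vu vu ab.
have cb' := gcd_unit_mul vu vu (sol3_gcd_unit_swap E ab).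
have [a0' b0' c0'] := And3 (gmul_unit_neq0 vu a0) (gmul_unit_neq0 vu b0) (gmul_unit_neq0 vu c0).
have [a1|a1] : ((gmul v alpha).1 %% 2 = 1)%Z \/ ((gmul v alpha).1 %% 2 = 0)%Z by lia.
- have [e [e' [eu e'u N]]] := normal_solution_of_sol3 hdelta E' ab' a0' b0' c0' aO' a1 Yv.
  exists (gmul e v), v, (gmul e' v), false; rewrite -!gmulA.
  by split; [exact: gunitM | do 2!split=> //; exact: gunitM].
- have c1 : ((gmul v gamma).1 %% 2 = 1)%Z by move: par; lia.
  have [e [e' [eu e'u N]]] :=
    normal_solution_of_sol3 hdelta (sol3_swap E') cb' c0' b0' a0' (xzO' aO') c1 Yv.
  exists (gmul e' v), v, (gmul e v), true; rewrite -!gmulA.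
  by split; [exact: gunitM | do 2!split=> //; exact: gunitM].
Qed.
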